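(* Let $N$ be a natural number, and let $\mathcal{T}_N$ be the class of all finite reflexive graphs $G$ whose vertex set can be written as a disjoint union $G_e\cup G_c\cup G_f$ such that: the graph induced on $G_e$ is empty; the graph induced on $G_c$ is complete; $|G_f|\le N$; and the connections between $G_e$ and $G_c$ are uniform, i.e. for all $x,y\in G_e$ and all $z,t\in G_c$, $x$ is adjacent to $z$ if and only if $y$ is adjacent to $t$. Then $\mathcal{T}_N$ is well quasi-ordered under both the standard and the strong homomorphic image orderings.
   Context: A graph is a digraph (set with binary relation $E$) whose edge relation is symmetric; a reflexive graph has a loop at every vertex. Empty means no edges between distinct vertices; complete means all pairs of distinct vertices are adjacent. A homomorphism maps edges to edges (in reflexive graphs, an edge or a non-edge may be collapsed to a single vertex); it is strong if additionally every edge of the target among vertices of the image is the image of an edge. Standard homomorphic image ordering: $A\preceq B$ iff there is a surjective homomorphism $B\to A$; strong: iff there is a surjective strong homomorphism $B\to A$. Well quasi-ordered means no infinite strictly decreasing sequence and no infinite antichain; structures considered up to isomorphism. *)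

From mathcomp Require Import all_boot.
Set Implicit Arguments. Unset Strict Implicit. Unset Printing Implicit Defensive.

Record rgraph := RGraph {
  vtx : finType;
  adj : rel vtx;
  adj_sym : symmetric adj;
  adj_refl : reflexive adj
}.

(* Homomorphism: maps edges to edges (in reflexive graphs collapsing an
   edge or non-edge to a vertex is automatically allowed via loops). *)
Definition is_hom (G H : rgraph) (f : vtx G -> vtx H) : Prop :=
  forall x y, adj x y -> adj (f x) (f y).

Definition is_strong_hom (G H : rgraph) (f : vtx G -> vtx H) : Prop :=
  is_hom f /\
  forall u v, (exists x, f x = u) -> (exists y, f y = v) -> adj u v ->
    exists x y, [/\ f x = u, f y = v & adj x y].

Definition surj (A B : Type) (f : A -> B) : Prop := forall b, exists a, f a = b.

Definition hom_image_le (A B : rgraph) : Prop :=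
  exists f : vtx B -> vtx A, is_hom f /\ surj f.

Definition strong_hom_image_le (A B : rgraph) : Prop :=
  exists f : vtx B -> vtx A, is_strong_hom f /\ surj f.

Definition wqo_on (C : rgraph -> Prop) (le : rgraph -> rgraph -> Prop) : Prop :=
  (~ exists s : nat -> rgraph,
       (forall n, C (s n)) /\
       (forall n, le (s n.+1) (s n) /\ ~ le (s n) (s n.+1))) /\
  (~ exists s : nat -> rgraph,
       (forall n, C (s n)) /\
       (forall i j, i <> j -> ~ le (s i) (s j))).

Definition in_TN (N : nat) (G : rgraph) : Prop :=
  exists Ge Gc Gf : {set vtx G},
    [/\ [/\ [disjoint Ge & Gc], [disjoint Ge & Gf], [disjoint Gc & Gf]
          & Ge :|: Gc :|: Gf = setT],
        (forall x y, x \in Ge -> y \in Ge -> x != y -> ~~ adj x y),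
        (forall x y, x \in Gc -> y \in Gc -> x != y -> adj x y),
        #|Gf| <= N
      & (forall x y z t, x \in Ge -> y \in Ge -> z \in Gc -> t \in Gc ->
           adj x z = adj y t)].

From Pilot Require Import Defs.
From Stdlib Require Import Classical ClassicalEpsilon Wf_nat.
From mathcomp Require Import all_boot.
Set Implicit Arguments. Unset Strict Implicit. Unset Printing Implicit Defensive.

(* Fix a partition (Ge, Gc, Gf) of a graph of T_N.  Label the at most N
   vertices of Gf by their position, and give every other vertex the class
   (does it lie in Gc?, labels of its neighbours in Gf).  Adjacency of two
   distinct vertices is then a function of their classes and of a finite
   shape: the adjacency among the labels and the uniform Ge-Gc adjacency.
   When G and H have the same shape and the same occupied classes, and no
   class of G is larger than in H, a class-preserving surjection H -> G with
   a class-preserving section exists, and it is a strong homomorphism.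
   As there are finitely many classes and shapes, Dickson's lemma on the
   class sizes finds in every sequence of T_N a pair i < j with s_i <= s_j,
   which for a transitive relation rules out infinite antichains and
   infinite strictly decreasing sequences. *)

Lemma increasing_chain (R : nat -> nat -> Prop) :
  (forall a, exists b, a < b /\ R a b) ->
  exists phi : nat -> nat, forall n, phi n < phi n.+1 /\ R (phi n) (phi n.+1).
Proof.
move=> /ClassicalEpsilon.choice[next nextP].
by exists (fun n => iter n next 0) => n; apply: nextP.
Qed.

Lemma exists_argmin_after (f : nat -> nat) (a : nat) :
  exists b, a < b /\ forall c, a < c -> f b <= f c.
Proof.
pose P v := exists2 c, a < c & f c = v.
have P_fSa : P (f a.+1) by exists a.+1.
have [v [[[b ab <-] bmin] _]] :=
  dec_inh_nat_subset_has_unique_least_element P (fun v => classic (P v))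
    (ex_intro P _ P_fSa).
by exists b; split=> // c ac; apply/leP/bmin; exists c.
Qed.

Lemma nondecreasing_subseq (f : nat -> nat) :
  exists phi : nat -> nat,
    {homo phi : m n / m < n} /\ {homo f \o phi : m n / m <= n}.
Proof.
(* Each term minimises [f] beyond the previous one. *)
have [phi phiP] := @increasing_chain (fun a b => forall c, a < c -> f b <= f c)
  (exists_argmin_after f).
exists (phi \o succn); split.
  by apply: homo_ltn => [y x z|n]; [apply: ltn_trans | case: (phiP n.+1)].
apply: homo_leq => [//|y x z|n /=]; first exact: leq_trans.
have [lt_n_Sn minP] := phiP n; apply: minP.
by apply: ltn_trans lt_n_Sn _; case: (phiP n.+1).
Qed.

Lemma dickson (I : finType) (c : nat -> I -> nat) :
  exists i j, i < j /\ forall t, c i t <= c j t.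
Proof.
have mono_subseq (ts : seq I) :
    exists phi : nat -> nat, {homo phi : m n / m < n} /\
    forall t, t \in ts -> {homo (fun n => c (phi n) t) : m n / m <= n}.
  elim: ts => [|t ts [phi [phi_incr phi_mono]]].
    by exists id; split=> [//|t]; rewrite in_nil.
  have [psi [psi_incr psi_mono]] := nondecreasing_subseq (fun n => c (phi n) t).
  exists (phi \o psi); split=> [m n mn | t']; first exact/phi_incr/psi_incr.
  rewrite inE => /predU1P[-> | /phi_mono mono m n mn]; first exact: psi_mono.
  exact/mono/(ltnW_homo psi_incr).
have [phi [phi_incr phi_mono]] := mono_subseq (enum I).
exists (phi 0), (phi 1); split=> [|t]; first exact: phi_incr.
by apply: (phi_mono t); rewrite ?mem_enum.
Qed.

(* The key is adjoined to the coordinates as its indicator vector. *)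
Lemma dickson_with_key (K I : finType) (key : nat -> K) (c : nat -> I -> nat) :
  exists i j, [/\ i < j, key i = key j & forall t, c i t <= c j t].
Proof.
pose c' n (t : I + K) :=
  match t with inl t => c n t | inr k => nat_of_bool (key n == k) end.
have [i [j [ij le_ij]]] := dickson c'.
exists i, j; split=> [//||t]; last exact: (le_ij (inl t)).
by have := le_ij (inr (key i)); rewrite /= eqxx lt0b => /eqP.
Qed.

Lemma wqo_on_of_good (C : Defs.rgraph -> Prop)
    (le : Defs.rgraph -> Defs.rgraph -> Prop) :
  (forall A B D, le A B -> le B D -> le A D) ->
  (forall s, (forall n, C (s n)) -> exists i j, i < j /\ le (s i) (s j)) ->
  wqo_on C le.
Proof.
move=> le_trans good; split=> [[s [Cs s_decr]] | [s [Cs s_anti]]].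
  have [i [j [ij le_ij]]] := good s Cs.
  suff : le (s i) (s i.+1) by case: (s_decr i).
  elim: j ij le_ij => // j IHj.
  rewrite ltnS leq_eqVlt => /predU1P[<- //|ij le_ij].
  by apply: IHj ij _; apply: le_trans le_ij _; case: (s_decr j).
have [i [j [ij le_ij]]] := good s Cs.
by apply: (s_anti i j) le_ij => /eqP; rewrite ltn_eqF.
Qed.

Lemma is_hom_comp (A B D : Defs.rgraph)
    (f : vtx B -> vtx A) (g : vtx D -> vtx B) :
  is_hom f -> is_hom g -> is_hom (f \o g).
Proof. by move=> homf homg x y /homg /homf. Qed.

Lemma surj_comp (A B D : Type) (f : B -> A) (g : D -> B) :
  surj f -> surj g -> surj (f \o g).
Proof. by move=> sf sg a; have [b <-] := sf a; have [d <-] := sg b; exists d. Qed.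

Lemma is_strong_hom_comp (A B D : Defs.rgraph)
    (f : vtx B -> vtx A) (g : vtx D -> vtx B) :
  is_strong_hom f -> is_strong_hom g -> surj g -> is_strong_hom (f \o g).
Proof.
move=> [homf liftf] [homg liftg] sg.
split=> [|_ _ [d1 <-] [d2 <-] uv]; first exact: is_hom_comp.
have [b1 [b2 [fb1 fb2 b12]]] :=
  liftf _ _ (ex_intro _ (g d1) erefl) (ex_intro _ (g d2) erefl) uv.
have [e1 [e2 [ge1 ge2 e12]]] := liftg b1 b2 (sg b1) (sg b2) b12.
by exists e1, e2; rewrite /= ge1 ge2.
Qed.

Lemma hom_image_le_trans (A B D : Defs.rgraph) :
  hom_image_le A B -> hom_image_le B D -> hom_image_le A D.
Proof.
move=> [f [homf sf]] [g [homg sg]].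
by exists (f \o g); split; [apply: is_hom_comp | apply: surj_comp].
Qed.

Lemma strong_hom_image_le_trans (A B D : Defs.rgraph) :
  strong_hom_image_le A B -> strong_hom_image_le B D -> strong_hom_image_le A D.
Proof.
move=> [f [homf sf]] [g [homg sg]].
by exists (f \o g); split; [apply: is_strong_hom_comp | apply: surj_comp].
Qed.

Lemma strong_hom_image_leW (A B : Defs.rgraph) :
  strong_hom_image_le A B -> hom_image_le A B.
Proof. by move=> [f [[homf _] sf]]; exists f. Qed.

Lemma exists_class_retraction (C : eqType) (T U : finType)
    (cT : T -> C) (cU : U -> C) :
  (forall c, #|[pred x | cT x == c]| <= #|[pred y | cU y == c]|) ->
  (forall y, exists x, cT x = cU y) ->
  exists (f : U -> T) (g : T -> U),
    [/\ cancel g f, forall y, cT (f y) = cU y & forall x, cU (g x) = cT x].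
Proof.
move=> le_fib occ.
pose fib (V : finType) (cl : V -> C) c := enum [pred v | cl v == c].
have fibP (V : finType) (cl : V -> C) c v : (v \in fib V cl c) = (cl v == c).
  by rewrite mem_enum.
have nth_fib (V : finType) (cl : V -> C) c d i :
    cl d = c -> cl (nth d (fib V cl c) i) = c.
  move=> dc; have [lt_i | ge_i] := ltnP i (size (fib V cl c)).
    by apply/eqP; rewrite -fibP mem_nth.
  by rewrite nth_default.
have [d dP] := fin_all_exists occ.
have /fin_all_exists[e eP] : forall x, exists y, cU y = cT x.
  move=> x; have /card_gt0P[y] : 0 < #|[pred y | cU y == cT x]|.
    by apply: leq_trans (le_fib (cT x)); apply/card_gt0P; exists x; rewrite inE /=.
  by rewrite inE => /eqP; exists y.
pose f y := nth (d y) (fib T cT (cU y)) (index y (fib U cU (cU y))).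
pose g x := nth (e x) (fib U cU (cT x)) (index x (fib T cT (cT x))).
have gP x : cU (g x) = cT x by apply: nth_fib.
exists f, g; split=> [x | y | //]; last exact: nth_fib.
have ix : index x (fib T cT (cT x)) < size (fib U cU (cT x)).
  by rewrite -cardE (leq_trans _ (le_fib _)) // cardE index_mem fibP.
by rewrite /f gP /g index_uniq ?enum_uniq // nth_index // fibP.
Qed.

Definition adj_by_class (G : Defs.rgraph) (C : Type) (cl : vtx G -> C)
    (A : rel C) :=
  forall x y, x != y -> adj x y = A (cl x) (cl y).

Lemma class_preserving_hom (C : Type) (A : rel C) (G H : Defs.rgraph)
    (clG : vtx G -> C) (clH : vtx H -> C) (f : vtx H -> vtx G) :
  adj_by_class clG A -> adj_by_class clH A -> (forall y, clG (f y) = clH y) ->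
  is_hom f.
Proof.
move=> adjG adjH fP x y xy; have [-> | fxy] := eqVneq (f x) (f y).
  exact: adj_refl.
have nxy : x != y by apply: contraNneq fxy => ->.
by rewrite adjG // !fP -adjH.
Qed.

Lemma strong_hom_image_le_by_class (C : eqType) (A : rel C) (G H : Defs.rgraph)
    (clG : vtx G -> C) (clH : vtx H -> C) :
  adj_by_class clG A -> adj_by_class clH A ->
  (forall c, #|[pred x | clG x == c]| <= #|[pred y | clH y == c]|) ->
  (forall y, exists x, clG x = clH y) ->
  strong_hom_image_le G H.
Proof.
move=> adjG adjH le_fib occ.
have [f [g [gK fP gP]]] := exists_class_retraction le_fib occ.
have homg : is_hom g := class_preserving_hom adjH adjG gP.
exists f; split=> [|x]; last by exists (g x).
split=> [|u v _ _ uv]; first exact: class_preserving_hom adjG adjH fP.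
by exists (g u), (g v); rewrite !gK; split=> //; apply: homg.
Qed.

Definition tn_partition (N : nat) (G : Defs.rgraph) (Ge Gc Gf : {set vtx G}) :
    Prop :=
  [/\ [/\ [disjoint Ge & Gc], [disjoint Ge & Gf], [disjoint Gc & Gf]
        & Ge :|: Gc :|: Gf = setT],
      (forall x y, x \in Ge -> y \in Ge -> x != y -> ~~ adj x y),
      (forall x y, x \in Gc -> y \in Gc -> x != y -> adj x y),
      #|Gf| <= N
    & (forall x y z t, x \in Ge -> y \in Ge -> z \in Gc -> t \in Gc ->
         adj x z = adj y t)].

Notation vclass N := ('I_N.+1 + bool * {set 'I_N.+1})%type.

(* In [inr (b, L)], [b] tells whether the vertex lies in [Gc]: two vertices
   of [Ge] are never adjacent, two of [Gc] always are, and [sh.2] is the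
   uniform adjacency between [Ge] and [Gc]. *)
Definition shape_adj (N : nat) (sh : {set 'I_N.+1 * 'I_N.+1} * bool) :
    rel (vclass N) :=
  fun c d => match c, d with
  | inl i, inl j => (i, j) \in sh.1
  | inl i, inr (_, L) => i \in L
  | inr (_, L), inl j => j \in L
  | inr (b, _), inr (b', _) => if b == b' then b else sh.2
  end.

Section TNClasses.

Variables (N : nat) (G : Defs.rgraph) (Ge Gc Gf : {set vtx G}).

Definition flabel (v : vtx G) : 'I_N.+1 := inord (index v (enum Gf)).

Definition tn_class (v : vtx G) : vclass N :=
  if v \in Gf then inl (flabel v)
  else inr (v \in Gc, [set flabel x | x in Gf & adj v x]).

Definition tn_shape : {set 'I_N.+1 * 'I_N.+1} * bool :=
  ([set (flabel x, flabel y) | x in Gf, y in Gf & adj x y],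
   [exists x in Ge, exists z in Gc, adj x z]).

Definition tn_key := (tn_shape, [set tn_class x | x : vtx G]).

Hypothesis partG : tn_partition N Ge Gc Gf.

Lemma flabel_inj : {in Gf &, injective flabel}.
Proof.
case: partG => _ _ _ GfN _.
have lt_index x : x \in Gf -> index x (enum Gf) < N.+1.
  move=> xf; rewrite ltnS; apply: leq_trans GfN.
  by apply: ltnW; rewrite cardE index_mem mem_enum.
move=> x y xf yf /(congr1 val); rewrite /= !inordK ?lt_index //.
by apply: index_inj; rewrite ?mem_enum.
Qed.

Lemma mem_flabel_image (P : pred (vtx G)) y :
  y \in Gf -> (flabel y \in [set flabel x | x in Gf & P x]) = P y.
Proof.
move=> yf; apply/imsetP/idP => [[x] | Py]; last by exists y; rewrite // inE yf.
by rewrite inE => /andP[xf Px] /flabel_inj-> .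
Qed.

Lemma mem_tn_shape_pairs x y : x \in Gf -> y \in Gf ->
  ((flabel x, flabel y) \in tn_shape.1) = adj x y.
Proof.
move=> xf yf; apply/imset2P/idP => [[x' y' x'f] | xy]; last first.
  by exists x y; rewrite // inE yf.
rewrite inE => /andP[y'f x'y'] [/flabel_inj-> // /flabel_inj-> //].
Qed.

Lemma adj_Ge_Gc x z : x \in Ge -> z \in Gc -> adj x z = tn_shape.2.
Proof.
case: partG => _ _ _ _ unif xe zc.
apply/idP/exists_inP => [xz | [x' x'e /exists_inP[z' z'c x'z']]].
  by exists x => //; apply/exists_inP; exists z.
by rewrite (unif x x' z z').
Qed.

Lemma tn_adj_by_class : adj_by_class tn_class (shape_adj tn_shape).
Proof.
case: partG => [[_ _ _ cover] Ge_empty Gc_full _ _] x y xy.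
have inGe v : v \notin Gf -> v \notin Gc -> v \in Ge.
  move=> vf vc; have : v \in Ge :|: Gc :|: Gf by rewrite cover inE.
  by rewrite !inE (negbTE vf) (negbTE vc) !orbF.
rewrite /tn_class; case: ifPn => xf; case: ifPn => yf /=.
- by rewrite mem_tn_shape_pairs.
- by rewrite mem_flabel_image // adj_sym.
- by rewrite mem_flabel_image.
have [xc | xc] := boolP (x \in Gc); have [yc | yc] := boolP (y \in Gc) => /=.
- exact: Gc_full.
- by rewrite adj_sym adj_Ge_Gc ?inGe.
- by rewrite adj_Ge_Gc ?inGe.
- by apply/negbTE/Ge_empty; rewrite ?inGe.
Qed.

End TNClasses.

Lemma tn_strong_hom_image_le (N : nat) (G H : Defs.rgraph)
    (Ge Gc Gf : {set vtx G}) (He Hc Hf : {set vtx H}) :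
  tn_partition N Ge Gc Gf -> tn_partition N He Hc Hf ->
  tn_key N Ge Gc Gf = tn_key N He Hc Hf ->
  (forall c, #|[pred x | tn_class N Gc Gf x == c]|
               <= #|[pred y | tn_class N Hc Hf y == c]|) ->
  strong_hom_image_le G H.
Proof.
move=> partG partH /eqP; rewrite xpair_eqE => /andP[/eqP shapeE /eqP occE].
move=> le_fib.
apply: (strong_hom_image_le_by_class (tn_adj_by_class partG)) le_fib _.
  by rewrite shapeE; apply: tn_adj_by_class.
move=> y; have : tn_class N Hc Hf y \in [set tn_class N Gc Gf x | x : vtx G].
  by rewrite occE imset_f.
by case/imsetP => x _ ->; exists x.
Qed.

Lemma tn_sequence_good (N : nat) (s : nat -> Defs.rgraph) :
  (forall n, in_TN N (s n)) ->
  exists i j, i < j /\ strong_hom_image_le (s i) (s j).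
Proof.
move=> sTN.
have part n : {P : {set vtx (s n)} * {set vtx (s n)} * {set vtx (s n)} |
                tn_partition N P.1.1 P.1.2 P.2}.
  apply: constructive_indefinite_description.
  by have [Ge [Gc [Gf partG]]] := sTN n; exists (Ge, Gc, Gf).
pose W n := sval (part n).
have [i [j [ij keyE le_fib]]] :=
  dickson_with_key (fun n => tn_key N (W n).1.1 (W n).1.2 (W n).2)
    (fun n c => #|[pred x | tn_class N (W n).1.2 (W n).2 x == c]|).
exists i, j; split=> //.
exact: tn_strong_hom_image_le (svalP (part i)) (svalP (part j)) keyE le_fib.
Qed.

Theorem theorem2p8 (N : nat) :
  wqo_on (in_TN N) hom_image_le /\ wqo_on (in_TN N) strong_hom_image_le.
Proof.
split; apply: wqo_on_of_good.
- exact: hom_image_le_trans.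
- by move=> s /tn_sequence_good[i [j [ij /strong_hom_image_leW]]]; exists i, j.
- exact: strong_hom_image_le_trans.
- exact: tn_sequence_good.
Qed.
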